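(* Let $0\le s<n$, $A\in M_{s+1,n-s}$ and $2\le j\le n-s$. There is a constant $K>0$ depending only on $A$ (and $n,j$) such that for all $w\in\mathcal S_{n+1,j}$: $$\max_{0\le i\le s}\ \max_{J\subset\{0,\dots,n\},\,\#J=j-1}\big|\langle(e_i+a_i)\wedge e_J,w\rangle\big|\le K\|R_Ac(w)\|$$ and $$\|R_Ac(w)\|\le K\max_{0\le i\le s}\ \max_{J\subset\{i+1,\dots,n\},\,\#J=j-1}\big|\langle(e_i+a_i)\wedge e_J,w\rangle\big|.$$
   Context: $V=\mathbb R^{n+1}$ with basis $e_0,\dots,e_n$, $V_0=\mathrm{span}(e_1,\dots,e_n)$; $e_J=e_{j_1}\wedge\dots\wedge e_{j_m}$ for $J=\{j_1<\dots<j_m\}$; $\bigwedge(V)$ carries the inner product making $\{e_J\}$ orthonormal. $\mathcal S_{n+1,j}$ is the set of $w=v_1\wedge\dots\wedge v_j$ with $v_1,\dots,v_j\in\mathbb Z^{n+1}$ linearly independent. Rows of $A$ are indexed $0,\dots,s$, columns $s+1,\dots,n$; $a_i=\sum_{k=s+1}^na_{i,k}e_k\in V$. $R_Ac(w)\in(\bigwedge^{j-1}V_0)^{s+1}$ is the vector whose $i$-th component is $\sum_{J\subset\{1,\dots,n\},\#J=j-1}\langle(e_i+a_i)\wedge e_J,w\rangle e_J$, with the Euclidean norm. *)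

From HB Require Import structures.
From mathcomp Require Import all_boot all_order all_algebra.
From mathcomp Require Import reals.
Set Implicit Arguments. Unset Strict Implicit. Unset Printing Implicit Defensive.
Import Order.TTheory GRing.Theory Num.Theory.
Local Open Scope ring_scope.

(* V = R^{n+1}, basis e_0..e_n indexed by 'I_(n.+1).  A multivector of /\(V) is given by its coordinates in the
   orthonormal basis (e_J)_J, J ranging over subsets of {0..n}. *)
Definition mvec (R : realType) (n : nat) := {ffun {set 'I_n.+1} -> R}.

Definition evec (R : realType) (n : nat) (l : 'I_n.+1) : 'I_n.+1 -> R :=
  fun k => (k == l)%:R.

Definition wedge (R : realType) (n m : nat) (v : 'I_m -> 'I_n.+1 -> R) : mvec R n :=
  [ffun I : {set 'I_n.+1} =>
     if #|I| == m then
       \det (\matrix_(k < m, l < m) v k (nth ord0 (enum I) l))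
     else 0].

Definition mdot (R : realType) (n : nat) (x y : mvec R n) : R :=
  \sum_(I : {set 'I_n.+1}) x I * y I.

Definition S_set (R : realType) (n j : nat) (w : mvec R n) : Prop :=
  exists v : 'I_j -> 'I_n.+1 -> R,
    (forall k l, exists z : int, v k l = z%:~R) /\
    row_free (\matrix_(k < j, l < n.+1) v k l) /\
    w = wedge v.

(* a_i = sum_{k=s+1}^n a_{i,k} e_k  (columns of A indexed s+1..n) ;
   this returns e_i + a_i. *)
Definition eplusa (R : realType) (n s : nat) (A : 'M[R]_(s.+1, n - s))
  (i : 'I_s.+1) : 'I_n.+1 -> R :=
  fun l => (val l == val i)%:R +
           (if (s < val l)%N then
              (if @insub _ (fun k => (k < n - s)%N) 'I_(n - s) (val l - s.+1)%N
               is Some k then A i k else 0)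
            else 0).

Definition fam (R : realType) (n s : nat) (A : 'M[R]_(s.+1, n - s)) (j : nat)
  (i : 'I_s.+1) (J : {set 'I_n.+1}) : 'I_j -> 'I_n.+1 -> R :=
  fun k => if val k == 0%N then eplusa A i
           else evec R (nth ord0 (enum J) (val k).-1).

Arguments fam {R n s} A j i J _ _.

Definition pair (R : realType) (n s : nat) (A : 'M[R]_(s.+1, n - s)) (j : nat)
  (i : 'I_s.+1) (J : {set 'I_n.+1}) (w : mvec R n) : R :=
  mdot (wedge (fam A j i J)) w.

(* R_A c(w) in (/\^{j-1} V_0)^{s+1}: component (i, J), J subset of {1..n},
   #J = j-1, is the e_J-coordinate of the i-th component *)
Definition RAc (R : realType) (n s : nat) (A : 'M[R]_(s.+1, n - s)) (j : nat)
  (w : mvec R n) : {ffun 'I_s.+1 * {set 'I_n.+1} -> R} :=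
  [ffun p : 'I_s.+1 * {set 'I_n.+1} => if (#|p.2| == j.-1) && (ord0 \notin p.2) then pair A j p.1 p.2 w
             else 0].

Definition RAc_norm (R : realType) (n s : nat) (A : 'M[R]_(s.+1, n - s)) (j : nat)
  (w : mvec R n) : R :=
  Num.sqrt (\sum_p (RAc A j w p) ^+ 2).

(* The pairings with J inside {i+1..n} are coordinates of R_A c(w), so both
   bounds follow once every functional
     w |-> < (e_i + a_i) /\ e_(t_1) /\ ... /\ e_(t_(j-1)), w >
   is shown to be a fixed linear combination of those target pairings.  Induct on the number of t_k <= i.  If none,
   either two t_k coincide and the pairing vanishes, or sorting the t_k gives
   a target pairing up to sign.  Otherwise let t_k = i' <= i and write
   e_(i') = (e_(i') + a_(i')) - a_(i').  Since a_(i') is supported on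
   {s+1..n}, expanding it lowers the count.  The other term vanishes if
   i' = i; if i' < i, swap e_(i') + a_(i') with e_i + a_i and expand
   e_i + a_i, supported on {i} and {s+1..n}: the resulting pairings are based
   at i' and their new index exceeds i', so the count drops again. *)

From HB Require Import structures.
From mathcomp Require Import all_boot all_order all_algebra.
From mathcomp Require Import perm.
From mathcomp Require Import reals.
From mathcomp Require Import zify.
Set Implicit Arguments. Unset Strict Implicit. Unset Printing Implicit Defensive.
Import Order.TTheory GRing.Theory Num.Theory.
Local Open Scope ring_scope.

Section Dominated.
Variables (X : Type) (R : realDomainType) (T : X -> R).

Definition dominated (f : X -> R) := exists C : R, forall x, `|f x| <= C * T x.

Lemma dominated_ext f g : f =1 g -> dominated g -> dominated f.
Proof. by move=> fg [C hC]; exists C => x; rewrite fg. Qed.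

Lemma dominated0 f : f =1 (fun=> 0) -> dominated f.
Proof. by move=> f0; exists 0 => x; rewrite f0 normr0 mul0r. Qed.

Lemma dominatedD f g : dominated f -> dominated g -> dominated (fun x => f x + g x).
Proof.
move=> [C hC] [D hD]; exists (C + D) => x.
by rewrite (le_trans (ler_normD _ _)) // mulrDl lerD.
Qed.

Lemma dominatedN f : dominated f -> dominated (fun x => - f x).
Proof. by move=> [C hC]; exists C => x; rewrite normrN. Qed.

Lemma dominatedB f g : dominated f -> dominated g -> dominated (fun x => f x - g x).
Proof. by move=> df dg; apply: dominatedD => //; apply: dominatedN. Qed.

Lemma dominatedZ c f : dominated f -> dominated (fun x => c * f x).
Proof.
move=> [C hC]; exists (`|c| * C) => x.
by rewrite normrM -mulrA ler_wpM2l.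
Qed.

Lemma dominated_sum (I : finType) (f : I -> X -> R) :
  (forall i, dominated (f i)) -> dominated (fun x => \sum_i f i x).
Proof.
move=> /fin_all_exists [C hC]; exists (\sum_i C i) => x.
by rewrite mulr_suml (le_trans (ler_norm_sum _ _ _)) // ler_sum.
Qed.

Lemma dominated_uniform (I : finType) (f : I -> X -> R) :
  (forall x, 0 <= T x) -> (forall i, dominated (f i)) ->
  exists K, 0 < K /\ forall i x, `|f i x| <= K * T x.
Proof.
move=> T0 /fin_all_exists [C hC]; exists (1 + \sum_i `|C i|); split.
  by rewrite ltr_pwDl // sumr_ge0.
move=> i x; apply: le_trans (hC i x) (ler_wpM2r (T0 x) _).
apply: le_trans (ler_norm _) _.
by rewrite (bigD1 i) //= addrCA lerDl addr_ge0 ?sumr_ge0.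
Qed.

End Dominated.

Lemma normr_le_sqrt_sum_sqr (R : rcfType) (I : finType) (x : I -> R) (p : I) :
  `|x p| <= Num.sqrt (\sum_q x q ^+ 2).
Proof.
rewrite -sqrtr_sqr ler_sqrt; last by rewrite sumr_ge0 // => q _; rewrite sqr_ge0.
by rewrite (bigD1 p) //= lerDl sumr_ge0 // => q _; rewrite sqr_ge0.
Qed.

Lemma sqrt_sum_sqr_le_card (R : rcfType) (I : finType) (x : I -> R) (B : R) :
  (forall q, `|x q| <= B) -> Num.sqrt (\sum_q x q ^+ 2) <= #|I|%:R * B.
Proof.
move=> xB; have B0 q : 0 <= B := le_trans (normr_ge0 (x q)) (xB q).
have sB : \sum_(q : I) B = #|I|%:R * B by rewrite sumr_const mulr_natl.
have cB : 0 <= #|I|%:R * B.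
  by rewrite -sB (le_trans _ (ler_sum _ (fun q _ => xB q))) ?sumr_ge0.
rewrite -[leRHS]ger0_norm // -sqrtr_sqr ler_sqrt ?sqr_ge0 //.
apply: (@le_trans _ _ (\sum_(q : I) B ^+ 2)).
  apply: ler_sum => q _; rewrite -real_normK ?num_real // ler_sqr ?nnegrE ?B0 //.
have -> : \sum_(q : I) B ^+ 2 = #|I|%:R * B ^+ 2 by rewrite sumr_const mulr_natl.
rewrite exprMn; apply: ler_wpM2r; first exact: sqr_ge0.
by rewrite -natrX ler_nat; nia.
Qed.

Lemma perm_of_enum_imset (T : finType) (x0 : T) m (t : 'I_m -> T) : injective t ->
  exists sg : 'S_m, forall k, t k = nth x0 (enum [set t k | k : 'I_m]) (sg k).
Proof.
move=> tinj; set S := [set t k | k : 'I_m].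
have /tuple_permP [sg hsg] : perm_eq (enum S) [tuple t k | k < m].
  apply: uniq_perm; rewrite /= ?enum_uniq ?(map_inj_uniq tinj) -?enumT ?enum_uniq // => x.
  by rewrite mem_enum; apply/imsetP/mapP => [] [k hk ->]; exists k; rewrite ?mem_enum.
by exists (sg^-1)%g => k; rewrite hsg -tnth_nth !tnth_mktuple permKV.
Qed.

Section WedgeDot.
Variables (R : realType) (n m : nat).
Implicit Types (w : mvec R n) (v : 'I_m -> 'I_n.+1 -> R).

Definition wedge_dot w v : R := mdot (wedge v) w.

Lemma wedge_dot_ext w v v' : v =1 v' -> wedge_dot w v = wedge_dot w v'.
Proof. by move=> vv'; rewrite /wedge_dot /wedge; under eq_ffun do under eq_mx do rewrite vv'. Qed.

Lemma det_fwith_row v p (x : 'I_n.+1 -> R) (g : 'I_m -> 'I_n.+1) :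
  \det (\matrix_(k, l) fwith p x v k (g l)) =
  \sum_q x q * \det (\matrix_(k, l) fwith p (evec R q) v k (g l)).
Proof.
have cofE y c : cofactor (\matrix_(k, l) fwith p y v k (g l)) p c =
                cofactor (\matrix_(k, l) fwith p x v k (g l)) p c.
  rewrite /cofactor; congr (_ * \det _); apply/matrixP=> a b.
  by rewrite !mxE /= eq_sym (negbTE (neq_lift p a)).
rewrite (expand_det_row _ p).
under [in RHS]eq_bigr => q _ do rewrite (expand_det_row _ p) mulr_sumr.
rewrite exchange_big /=; apply: eq_bigr => c _.
under eq_bigr => q _ do rewrite cofE mxE /= eqxx mulrA.
rewrite -mulr_suml mxE /= eqxx; congr (_ * _).
rewrite (bigD1 (g c)) //= big1 ?addr0 /evec ?eqxx ?mulr1 // => q /negbTE hq.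
by rewrite eq_sym hq mulr0.
Qed.

Lemma wedge_dot_fwith w v p x :
  wedge_dot w (fwith p x v) = \sum_q x q * wedge_dot w (fwith p (evec R q) v).
Proof.
rewrite /wedge_dot /mdot.
under [in RHS]eq_bigr => q _ do rewrite mulr_sumr.
rewrite exchange_big /=; apply: eq_bigr => I _.
under eq_bigr => q _ do rewrite ffunE.
rewrite !ffunE; case: eqP => _; last by rewrite big1 => [|q _]; rewrite !mul0r ?mulr0.
by rewrite det_fwith_row mulr_suml; apply: eq_bigr => q _; rewrite mulrA.
Qed.

Lemma wedge_dot_alt w v (p1 p2 : 'I_m) : p1 != p2 -> v p1 = v p2 -> wedge_dot w v = 0.
Proof.
move=> hp hv; rewrite /wedge_dot /mdot big1 // => I _; rewrite ffunE.
case: eqP => _; last by rewrite mul0r.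
by rewrite (determinant_alternate hp) ?mul0r // => l; rewrite !mxE hv.
Qed.

Lemma wedge_dot_perm w v (sg : 'S_m) :
  wedge_dot w (v \o sg) = (-1) ^+ sg * wedge_dot w v.
Proof.
rewrite /wedge_dot /mdot mulr_sumr; apply: eq_bigr => I _; rewrite !ffunE.
case: eqP => _; last by rewrite !mul0r mulr0.
have -> : (\matrix_(k, l) (v \o sg) k (nth ord0 (enum I) l) : 'M[R]_m) =
          row_perm sg (\matrix_(k, l) v k (nth ord0 (enum I) l)).
  by apply/matrixP=> a b; rewrite !mxE.
by rewrite row_permE det_mulmx det_perm mulrA.
Qed.

End WedgeDot.

Lemma eplusa_low (R : realType) n s (A : 'M[R]_(s.+1, n - s)) i (l : 'I_n.+1) :
  (val l <= s)%N -> eplusa A i l = (val l == val i)%:R.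
Proof. by rewrite /eplusa leqNgt => /negbTE ->; rewrite addr0. Qed.

Section Pairing.
Variables (R : realType) (n s : nat) (A : 'M[R]_(s.+1, n - s)) (m : nat).
Implicit Types (i : 'I_s.+1) (t : 'I_m -> 'I_n.+1) (w : mvec R n).

Definition fam_tail i t : 'I_m.+1 -> 'I_n.+1 -> R :=
  fun k => if unlift ord0 k is Some k' then evec R (t k') else eplusa A i.

Lemma pairE i J w :
  pair A m.+1 i J w = wedge_dot w (fam_tail i (fun k => nth ord0 (enum J) k)).
Proof.
apply: wedge_dot_ext => k; rewrite /fam /fam_tail.
by case: (unliftP ord0 k) => [k'|] ->; rewrite ?liftK ?unlift_none.
Qed.

Lemma fam_tail_fwith i t k0 l :
  fwith (lift ord0 k0) (evec R l) (fam_tail i t) =1 fam_tail i (fwith k0 l t).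
Proof.
move=> k /=; rewrite /fam_tail; case: (unliftP ord0 k) => [k'|] ->.
  by rewrite (inj_eq lift_inj) /=; case: eqP.
by rewrite (negbTE (neq_lift _ _)).
Qed.

Definition target_max w : R :=
  \big[Num.max/0]_(i < s.+1)
     \big[Num.max/0]_(J : {set 'I_n.+1} | (#|J| == m) && [forall l in J, (val i < val l)%N])
        `|pair A m.+1 i J w|.

Lemma target_max_ge0 w : 0 <= target_max w.
Proof.
apply: (big_ind (fun x => 0 <= x)) => // [x y hx hy|i _]; first by rewrite le_max hx.
by apply: (big_ind (fun x => 0 <= x)) => // x y hx hy; rewrite le_max hx.
Qed.

Local Notation dominated := (dominated target_max).

Lemma dominated_target i (J : {set 'I_n.+1}) :
  #|J| = m -> {in J, forall l, (val i < val l)%N} -> dominated (pair A m.+1 i J).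
Proof.
move=> cJ hJ; exists 1 => w; rewrite mul1r.
apply: le_trans (le_bigmax _ _ i); apply: le_bigmax_cond.
by rewrite cJ eqxx; apply/forall_inP.
Qed.

Lemma dominated_fam_tail_above i t :
  (forall k, (val i < val (t k))%N) -> dominated (fun w => wedge_dot w (fam_tail i t)).
Proof.
move=> ht; case: (boolP [exists a, exists b, (a != b) && (t a == t b)]).
  move=> /existsP [a /existsP [b /andP [ab /eqP tab]]].
  have ab' : lift ord0 a != lift ord0 b by rewrite (inj_eq lift_inj).
  apply: dominated0 => w; apply: (wedge_dot_alt w ab').
  by rewrite /fam_tail !liftK tab.
move=> no_repeat; have tinj : injective t.
  move=> a b tab; apply/eqP; apply: contraNT no_repeat => ab.
  by apply/existsP; exists a; apply/existsP; exists b; rewrite ab tab eqxx.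
have [sg hsg] := perm_of_enum_imset ord0 tinj; set J := [set t k | k : 'I_m] in hsg.
pose lsg := lift_perm ord0 ord0 sg.
apply: (dominated_ext (g := fun w => (-1) ^+ lsg * pair A m.+1 i J w)).
  move=> w; rewrite pairE -wedge_dot_perm; apply: wedge_dot_ext => k /=.
  rewrite /fam_tail; case: (unliftP ord0 k) => [k'|] ->.
    by rewrite lift_perm_lift !liftK hsg.
  by rewrite lift_perm_id unlift_none.
apply/dominatedZ/dominated_target; first by rewrite card_imset ?card_ord.
by move=> _ /imsetP [k _ ->].
Qed.

Definition low_count i t : nat := \sum_k (val (t k) <= val i)%N.

Lemma low_count_fwith i i' t k0 l :
  (val i' <= val i)%N -> (val (t k0) <= val i)%N -> (val i' < val l)%N ->
  (low_count i' (fwith k0 l t) < low_count i t)%N.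
Proof.
move=> i'i tk0 i'l; rewrite /low_count (bigD1 k0) //= [X in (_ < X)%N](bigD1 k0) //=.
rewrite ltnNge in i'l; rewrite eqxx tk0 (negbTE i'l) add0n add1n ltnS.
apply: leq_sum => k /negbTE -> /=.
by case: (leqP (t k) i') => // /leq_trans ->.
Qed.

Lemma wedge_dot_fam_tail_split i t k0 (i' : 'I_s.+1) w : val (t k0) = val i' ->
  wedge_dot w (fam_tail i t) =
  wedge_dot w (fwith (lift ord0 k0) (eplusa A i') (fam_tail i t)) -
  \sum_l (eplusa A i' l - (val l == val i')%:R) * wedge_dot w (fam_tail i (fwith k0 l t)).
Proof.
move=> tk0; rewrite wedge_dot_fwith.
under eq_bigr => l _ do rewrite (wedge_dot_ext _ (fam_tail_fwith _ _ _ _)).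
rewrite -sumrB; under eq_bigr => l _ do rewrite -mulrBl subKr.
rewrite (bigD1 (t k0)) //= big1 => [|l /negbTE tl]; last first.
  by rewrite -tk0 (inj_eq val_inj) tl mul0r.
rewrite tk0 eqxx mul1r addr0 -(wedge_dot_ext _ (fam_tail_fwith _ _ _ _)).
by apply: wedge_dot_ext => k /=; case: eqP => // ->; rewrite /fam_tail liftK.
Qed.

Lemma wedge_dot_fam_tail_swap i t k0 (i' : 'I_s.+1) w :
  wedge_dot w (fwith (lift ord0 k0) (eplusa A i') (fam_tail i t)) =
  - \sum_l eplusa A i l * wedge_dot w (fam_tail i' (fwith k0 l t)).
Proof.
set p := lift ord0 k0; have op : ord0 != p := neq_lift _ _.
have swap : fwith p (eplusa A i') (fam_tail i t) =1
            fwith p (eplusa A i) (fam_tail i' t) \o tperm ord0 p.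
  move=> k /=; case: (tpermP ord0 p k) => [->|->|ko kp].
  - by rewrite eqxx (negbTE op) /fam_tail unlift_none.
  - by rewrite eqxx (negbTE op) /fam_tail unlift_none.
  - by case: eqP => // _; rewrite /fam_tail; case: (unliftP ord0 k) => [k'|] //.
rewrite (wedge_dot_ext _ swap) wedge_dot_perm odd_tperm op expr1 mulN1r.
rewrite wedge_dot_fwith; congr (- _); apply: eq_bigr => l _.
by rewrite (wedge_dot_ext _ (fam_tail_fwith _ _ _ _)).
Qed.

Lemma dominated_fam_tail i t : dominated (fun w => wedge_dot w (fam_tail i t)).
Proof.
have [b] := ubnP (low_count i t); elim: b i t => // b IH i t /ltnSE hb.
case: (boolP [exists k, val (t k) <= val i]%N) => [/existsP [k0 tk0] | /existsPn above];
  last by apply: dominated_fam_tail_above => k; rewrite ltnNge above.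
pose i' : 'I_s.+1 := Ordinal (leq_ltn_trans tk0 (ltn_ord i)).
have descend i'' l : (val i'' <= val i)%N -> (val i'' < val l)%N ->
    dominated (fun w => wedge_dot w (fam_tail i'' (fwith k0 l t))).
  by move=> i''i i''l; apply/IH/leq_trans/hb; apply: low_count_fwith.
apply: (dominated_ext (fun w => @wedge_dot_fam_tail_split i t k0 i' w erefl)).
have lt_high (x : 'I_s.+1) (l : 'I_n.+1) : (s < val l)%N -> (val x < val l)%N.
  exact: leq_trans (ltn_ord x).
apply: dominatedB; last first.
  apply: dominated_sum => l; case: (leqP (val l) s) => [ls | /(lt_high i) il].
    by apply: dominated0 => w; rewrite eplusa_low // subrr mul0r.
  by apply/dominatedZ/descend.
have [-> | i'i] := eqVneq i' i.
  apply: dominated0 => w; apply: (wedge_dot_alt w (neq_lift ord0 k0)).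
  by rewrite /= eqxx /fam_tail unlift_none.
apply: (dominated_ext (fun w => @wedge_dot_fam_tail_swap i t k0 i' w)).
apply/dominatedN/dominated_sum => l; have [el0 | el] := eqVneq (eplusa A i l) 0.
  by apply: dominated0 => w; rewrite el0 mul0r.
apply/dominatedZ/descend => //; case: (leqP (val l) s) => [ls | /(lt_high i') //].
move: el; rewrite eplusa_low // pnatr_eq0 eqb0 negbK => /eqP ->.
by rewrite ltn_neqAle tk0 andbT.
Qed.

Lemma pair_le_target : exists K : R, 0 < K /\
  forall i J w, `|pair A m.+1 i J w| <= K * target_max w.
Proof.
have [|K [K0 hK]] := @dominated_uniform _ _ target_max _
  (fun x : 'I_s.+1 * {set 'I_n.+1} => pair A m.+1 x.1 x.2) target_max_ge0.
  by move=> x; apply: dominated_ext (pairE _ _) (dominated_fam_tail _ _).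
by exists K; split=> // i J; apply: (hK (i, J)).
Qed.

Lemma target_max_le_RAc_norm w : target_max w <= RAc_norm A m.+1 w.
Proof.
apply: bigmax_le => [|i _]; first exact: sqrtr_ge0.
apply: bigmax_le => [|J /andP [cJ /forall_inP hJ]]; first exact: sqrtr_ge0.
have -> : pair A m.+1 i J w = RAc A m.+1 w (i, J).
  by rewrite ffunE /= cJ; case: ifP => // /negbFE /hJ.
exact: normr_le_sqrt_sum_sqr.
Qed.

End Pairing.

Theorem lemma5p5 (R : realType) (n s : nat) (A : 'M[R]_(s.+1, n - s)) (j : nat)
  (hs : (s < n)%N) (hj2 : (2 <= j)%N) (hj : (j <= n - s)%N) :
  exists K : R, 0 < K /\
    forall w : mvec R n, S_set j w ->
      (\big[Num.max/0]_(i < s.+1)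
         \big[Num.max/0]_(J : {set 'I_n.+1} | #|J| == j.-1)
           `|pair A j i J w| <= K * RAc_norm A j w)
      /\
      (RAc_norm A j w <=
         K * \big[Num.max/0]_(i < s.+1)
               \big[Num.max/0]_(J : {set 'I_n.+1} |
                   (#|J| == j.-1) && [forall l in J, (val i < val l)%N])
                 `|pair A j i J w|).
Proof.
case: j hj2 hj => // m _ _.
have [K [K0 hK]] := pair_le_target A m.
pose N : R := #|{: 'I_s.+1 * {set 'I_n.+1}}|%:R.
have N0 : 0 <= N := ler0n _ _.
exists ((N + 1) * K); split=> [|w _]; first by rewrite mulr_gt0 // ltr_wpDl.
have T0 := target_max_ge0 A m w; have TN := target_max_le_RAc_norm A m w.
have KN : K <= (N + 1) * K by rewrite ler_peMl ?(ltW K0) // lerDr.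
split.
  have bound0 : 0 <= (N + 1) * K * RAc_norm A m.+1 w.
    by rewrite mulr_ge0 ?(le_trans (ltW K0) KN) ?(le_trans T0 TN).
  apply: bigmax_le => // i _; apply: bigmax_le => // J _.
  by apply: le_trans (hK i J w) _; apply: ler_pM => //; apply: ltW.
apply: le_trans (sqrt_sum_sqr_le_card (B := K * target_max A m w) _) _.
  move=> [i J]; rewrite ffunE; case: ifP => _; first exact: hK.
  by rewrite normr0 mulr_ge0 // ltW.
rewrite -/N mulrA; apply: ler_wpM2r => //; apply: ler_wpM2r; first exact: ltW.
by rewrite lerDl.
Qed.
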